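(* Let $H_{ij}$, $i=1,\ldots,b$, $j=1,\ldots,s_i$, be $n=\sum_{i=1}^b s_i$ null hypotheses arranged in $b$ blocks, with corresponding $p$-values $P_{ij}$, where each $p$-value of a true null hypothesis is distributed as $U(0,1)$. Assume the rows $(P_{i1},\ldots,P_{is_i})$, $i=1,\ldots,b$, are mutually independent, with arbitrary dependence allowed within each row. Fix $\alpha\in(0,1)$ and apply the following two-stage BH method: (1) set $\tilde P_i=\bar s\min_{1\le j\le s_i}P_{ij}$ with $\bar s=n/b$; (2) order the block $p$-values as $\tilde P_{(1)}\le\cdots\le\tilde P_{(b)}$ and let $B=\max\{1\le i\le b:\tilde P_{(i)}\le i\alpha/b\}$; (3) if this maximum exists, reject $H_{ij}$ for all $(i,j)$ with $\tilde P_i\le\tilde P_{(B)}$ and $P_{ij}\le B\alpha/n$, and otherwise reject nothing. Then for every configuration of true and false null hypotheses the false discovery rate of this method is at most $\alpha$.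
   Context: Write $H_{ij}=0$ if the hypothesis is true and $H_{ij}=1$ if it is false. If $V$ is the number of true null hypotheses rejected and $R$ the total number of rejections, the false discovery rate is $\mathrm{FDR}=E\left(V/\max\{R,1\}\right)$. *)

From HB Require Import structures.
From mathcomp Require Import all_boot all_order all_algebra.
From mathcomp Require Import all_classical all_reals all_analysis.
Unset Printing Implicit Defensive.
Import Order.TTheory GRing.Theory Num.Theory.
Local Open Scope classical_set_scope.
Local Open Scope ring_scope.

Section TwoStageBH.
Context {R : realType} (b : nat) (s : 'I_b -> nat).

(* p-values P_ij as functions of the outcome w; block i has s i hypotheses. *)
Variable T : Type.
Variable X : forall i : 'I_b, 'I_(s i) -> T -> R.

Definition ntot : nat := (\sum_(i < b) s i)%N.

Definition sbar : R := ntot%:R / b%:R.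

(* min_{1 <= j <= s_i} P_ij (for s_i > 0; the default for an empty block is irrelevant) *)
Definition row_min (i : 'I_b) (w : T) : R :=
  let vals := [seq X i j w | j <- enum 'I_(s i)] in
  foldr Num.min (head 0 vals) vals.

Definition Ptilde (i : 'I_b) (w : T) : R := sbar * row_min i w.

Definition ord_stat (w : T) (k : nat) : R :=
  nth 0 (sort <=%R [seq Ptilde i w | i <- enum 'I_b]) k.-1.

(* B = max { 1 <= k <= b : tilde P_(k) <= k alpha / b }, and 0 if no such k *)
Definition Bidx (alpha : R) (w : T) : nat :=
  (\max_(k < b.+1 | (0 < (k : nat))%N && (ord_stat w k <= (k : nat)%:R * alpha / b%:R)%R) (k : nat))%N.

Definition rejected (alpha : R) (w : T) (i : 'I_b) (j : 'I_(s i)) : bool :=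
  let B := Bidx alpha w in
  [&& (0 < B)%N, Ptilde i w <= ord_stat w B & X i j w <= B%:R * alpha / ntot%:R].

(* H i j = true  iff  H_ij = 1 (hypothesis false) *)
Variable H : forall i : 'I_b, 'I_(s i) -> bool.

Definition Rnum (alpha : R) (w : T) : nat :=
  (\sum_(i < b) \sum_(j < s i) rejected alpha w i j)%N.

Definition Vnum (alpha : R) (w : T) : nat :=
  (\sum_(i < b) \sum_(j < s i) (rejected alpha w i j && ~~ H i j))%N.

Definition FDP (alpha : R) (w : T) : R := (Vnum alpha w)%:R / (maxn (Rnum alpha w) 1)%:R.

End TwoStageBH.

Section Prob.
Context {d : measure_display} {T : measurableType d} {R : realType}.

Definition row_sigma (b : nat) (s : 'I_b -> nat) (X : forall i : 'I_b, 'I_(s i) -> T -> R)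
  (i : 'I_b) : set (set T) :=
  <<s [set E | exists (j : 'I_(s i)) (A : set R), measurable A /\ E = X i j @^-1` A] >>.

(* mutual independence of the rows (finitely many: product rule over all blocks,
   subfamilies are obtained by taking E i = setT) *)
Definition rows_independent (P : probability T R) (b : nat) (s : 'I_b -> nat)
  (X : forall i : 'I_b, 'I_(s i) -> T -> R) : Prop :=
  forall E : 'I_b -> set T, (forall i, row_sigma b s X i (E i)) ->
    P (\bigcap_(i in [set: 'I_b]) E i) = (\prod_(i < b) P (E i))%E.

Definition FDR (P : probability T R) (b : nat) (s : 'I_b -> nat)
  (X : forall i : 'I_b, 'I_(s i) -> T -> R) (H : forall i : 'I_b, 'I_(s i) -> bool)
  (alpha : R) : \bar R :=
  (\int[P]_w (FDP b s T X H alpha w)%:E)%E.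

End Prob.

From HB Require Import structures.
From mathcomp Require Import all_boot all_order all_algebra.
From mathcomp Require Import all_classical all_reals all_analysis.
From mathcomp Require Import ring.
From mathcomp Require Import measurable_realfun.
Import Order.TTheory GRing.Theory Num.Theory.
Local Open Scope classical_set_scope.
Local Open Scope ring_scope.

(* For a true null H_ij, let B_i be the step-up index recomputed with block i
   forced to pass every level; B_i depends on the other rows only, hence is
   independent of P_ij.  If H_ij is rejected then P_ij <= B alpha / n, so block i
   passes every level >= B, which forces B_i = B; moreover at least B hypotheses
   are rejected.  Hence
     FDP <= sum_{H_ij true} sum_{k >= 1} 1{P_ij <= k alpha / n, B_i = k} / k.
   By independence and uniformity each inner term has expectation
   (k alpha / n) P(B_i = k) / k, so each true null contributes at most alpha / n,
   and there are at most n of them. *)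

Section FoldrMin.
Context {R : realDomainType}.

Lemma foldr_min_le (v : seq R) x0 y : y \in v -> foldr Num.min x0 v <= y.
Proof.
elim: v => [//|a v IHv] /=; rewrite inE => /orP [/eqP -> | yv].
  by rewrite ge_min lexx.
by rewrite ge_min IHv ?orbT.
Qed.

Lemma foldr_min_mem (v : seq R) x0 : foldr Num.min x0 v \in x0 :: v.
Proof.
elim: v => [|a v IHv] /=; first by rewrite mem_head.
rewrite {1}/Order.min; case: ifP => _; first by rewrite !inE eqxx orbT.
by move: IHv; rewrite !inE => /orP [] ->; rewrite ?orbT.
Qed.

End FoldrMin.

Lemma nth_sort_le d (T : orderType d) (v : seq T) x0 k x : (0 < k <= size v)%N ->
  (nth x0 (sort <=%O v) k.-1 <= x)%O = (k <= count (<= x)%O v)%N.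
Proof.
case: k => [//|k] /= k_lt; have sorted_v := sort_le_sorted v.
have count_sort : count (<= x)%O (sort <=%O v) = count (<= x)%O v.
  exact/permP/permEl/perm_sort.
have [k_lt_count|count_le_k] := ltnP k (count (<= x)%O v).
  by apply: nth_count_le; rewrite ?count_sort.
apply/negbTE; rewrite -ltNge; apply: nth_count_gt => //.
by rewrite count_sort count_le_k size_sort.
Qed.

Lemma count_enum_card (T : finType) (p : pred T) : count p (enum T) = #|p|.
Proof. by rewrite -sum1_count -sum1_card big_enum_cond. Qed.

Section StepUp.
Local Open Scope nat_scope.
Variable b : nat.

Definition stepup (N : nat -> nat) : nat :=
  \max_(k < b.+1 | (0 < k) && (k <= N k)) k.

Implicit Types N : nat -> nat.

Lemma stepup_le N : stepup N <= b.
Proof. by apply/bigmax_leqP => k _; rewrite -ltnS. Qed.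

Lemma leq_stepup N k : 0 < k <= b -> k <= N k -> k <= stepup N.
Proof.
case/andP => k_gt0 k_le_b k_le_N.
by apply: (@leq_bigmax_cond _ _ _ (Ordinal (k_le_b : k < b.+1))) => /=; rewrite k_gt0.
Qed.

Lemma stepup_attained N : 0 < stepup N -> stepup N <= N (stepup N).
Proof.
move=> stepup_gt0.
case: (pickP (fun k : 'I_b.+1 => (0 < k) && (k <= N k))) => [k0 Pk0 | P0]; last first.
  by move: stepup_gt0; rewrite /stepup big_pred0.
by rewrite /stepup (bigop.bigmax_eq_arg k0 Pk0); case: arg_maxnP => // k /andP [].
Qed.

Lemma eq_stepup N N' : (forall m, 0 < m <= b -> N m = N' m) -> stepup N = stepup N'.
Proof.
move=> eqN; apply: eq_bigl => k; have [->//|k_gt0] := posnP k.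
by rewrite /= eqN // k_gt0 -ltnS ltn_ord.
Qed.

Lemma stepup_stable N N' : 0 < stepup N ->
  (forall m, stepup N <= m <= b -> N' m = N m) -> stepup N' = stepup N.
Proof.
move=> stepup_gt0 eqN; apply/eqP; rewrite eqn_leq; apply/andP; split.
  apply/bigmax_leqP => k /andP [k_gt0 k_le_N']; rewrite leqNgt; apply/negP => lt_k.
  have k_le_b : k <= b by rewrite -ltnS.
  have : k <= stepup N by rewrite leq_stepup ?k_gt0 // -eqN ?k_le_b ?(ltnW lt_k).
  by rewrite leqNgt lt_k.
apply: leq_stepup; first by rewrite stepup_gt0 stepup_le.
by rewrite eqN ?leqnn ?stepup_le // stepup_attained.
Qed.

End StepUp.

Section RowMin.
Context {R : realType} (b : nat) (s : 'I_b -> nat) (T : Type)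
  (X : forall i : 'I_b, 'I_(s i) -> T -> R).

Lemma row_min_le i w j : row_min b s T X i w <= X i j w.
Proof. by apply: foldr_min_le; apply: map_f; rewrite mem_enum. Qed.

Lemma row_min_le_exists i w t : (0 < s i)%N ->
  (row_min b s T X i w <= t) = [exists j, X i j w <= t].
Proof.
move=> s_gt0; apply/idP/existsP => [|[j]]; last exact/le_trans/row_min_le.
rewrite /row_min; set v := map _ _.
have v_nil : v != [::] by rewrite -size_eq0 size_map size_enum_ord -lt0n.
have /mapP [j _ ->] : foldr Num.min (head 0 v) v \in v.
  have := foldr_min_mem v (head 0 v); rewrite inE => /orP [/eqP -> | //].
  by case: v v_nil => //= a v' _; rewrite mem_head.
by exists j.
Qed.

Definition nblocks_le (w : T) (x : R) : nat := #|[pred l | Ptilde b s T X l w <= x]|.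

Lemma ord_stat_le w k x : (0 < k <= b)%N ->
  (ord_stat b s T X w k <= x) = (k <= nblocks_le w x)%N.
Proof.
move=> k_range; rewrite /ord_stat nth_sort_le; first by rewrite count_map count_enum_card.
by rewrite size_map size_enum_ord.
Qed.

End RowMin.

Section StepUpPointwise.
Context {R : realType} (b : nat) (s : 'I_b -> nat) (T : Type)
  (X : forall i : 'I_b, 'I_(s i) -> T -> R) (alpha : R).
Hypothesis b_gt0 : (0 < b)%N.
Hypothesis s_gt0 : forall i, (0 < s i)%N.
Hypothesis alpha_ge0 : 0 <= alpha.

Local Notation n := (ntot b s).
Local Notation Pt := (Ptilde b s T X).
Local Notation B := (Bidx b s T X alpha).

Definition block_level (m : nat) : R := m%:R * alpha / b%:R.
Definition hyp_level (m : nat) : R := m%:R * alpha / n%:R.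

Lemma ntot_gt0 : (0 < n)%N.
Proof. by rewrite /ntot (bigD1 (Ordinal b_gt0)) //= ltn_addr. Qed.

Lemma b_le_ntot : (b <= n)%N.
Proof. by rewrite -[b in (b <= _)%N]card_ord -sum1_card leq_sum. Qed.

Lemma sbar_gt0 : 0 < sbar b s :> R.
Proof. by rewrite /sbar divr_gt0 // ltr0n ?ntot_gt0. Qed.

Lemma sbar_hyp_level m : sbar b s * hyp_level m = block_level m.
Proof.
rewrite /sbar /hyp_level /block_level; field.
by rewrite !pnatr_eq0 -!lt0n ntot_gt0 b_gt0.
Qed.

Lemma le_block_level m m' : (m <= m')%N -> block_level m <= block_level m'.
Proof. by move=> le_mm'; rewrite ler_wpM2r ?invr_ge0 // ler_wpM2r // ler_nat. Qed.

Lemma Ptilde_le_block_level i w m :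
  (Pt i w <= block_level m) = [exists j, X i j w <= hyp_level m].
Proof. by rewrite /Ptilde -sbar_hyp_level ler_pM2l ?sbar_gt0 // row_min_le_exists. Qed.

Definition nblocks_pass (w : T) (m : nat) : nat := nblocks_le b s T X w (block_level m).

Lemma Bidx_stepup w : B w = stepup b (nblocks_pass w).
Proof.
apply: eq_bigl => k; have [->//|k_gt0] := posnP k.
by rewrite /= ord_stat_le // k_gt0 -ltnS ltn_ord.
Qed.

Lemma Bidx_le w : (B w <= b)%N.
Proof. by rewrite Bidx_stepup stepup_le. Qed.

Lemma ord_stat_Bidx w : (0 < B w)%N -> ord_stat b s T X w (B w) <= block_level (B w).
Proof.
move=> B_gt0; rewrite ord_stat_le ?B_gt0 ?Bidx_le //.
by have := @stepup_attained b (nblocks_pass w); rewrite -Bidx_stepup => /(_ B_gt0).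
Qed.

Lemma Bidx_le_Rnum w : (0 < B w)%N -> (B w <= Rnum b s T X alpha w)%N.
Proof.
move=> B_gt0; set x := ord_stat b s T X w (B w).
have : (B w <= nblocks_le b s T X w x)%N by rewrite -ord_stat_le ?B_gt0 ?Bidx_le.
move/leq_trans; apply; rewrite /nblocks_le -sum1_card big_mkcond /=.
apply: leq_sum => l _; rewrite inE; case: ifP => // pass_l.
have /existsP [j Xlj] : [exists j, X l j w <= hyp_level (B w)].
  by rewrite -Ptilde_le_block_level (le_trans pass_l) ?ord_stat_Bidx.
have rej : rejected b s T X alpha w l j by rewrite /rejected B_gt0 pass_l.
by rewrite (bigD1 j) //= rej.
Qed.

Definition passes (l : 'I_b) (w : T) : {set 'I_b.+1} :=
  [set m : 'I_b.+1 | Pt l w <= block_level m].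

Definition stepup_pattern (q : {ffun 'I_b -> {set 'I_b.+1}}) : nat :=
  stepup b (fun m => #|[pred l | inord m \in q l]|).

(* The index B_i.  Going through the finite patterns [passes l w] of the other
   blocks makes its independence from row [i] an instance of [indep_pattern_event]. *)
Definition Bidx_forced (i : 'I_b) (w : T) : nat :=
  stepup_pattern [ffun l => if l == i then [set: 'I_b.+1]%SET else passes l w].

Lemma Bidx_forced_eq i j w :
  (0 < B w)%N -> X i j w <= hyp_level (B w) -> Bidx_forced i w = B w.
Proof.
move=> B_gt0 Xij.
have pass_i m : (B w <= m)%N -> Pt i w <= block_level m.
  move=> le_Bm; apply: le_trans _ (le_block_level _ _ le_Bm).
  by rewrite Ptilde_le_block_level; apply/existsP; exists j.
rewrite /Bidx_forced /stepup_pattern Bidx_stepup.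
transitivity (stepup b (fun m => #|[pred l | (l == i) || (Pt l w <= block_level m)]|)).
  apply: eq_stepup => m /andP [_ m_le]; apply: eq_card => l.
  by rewrite !inE ffunE; case: eqP => _; rewrite ?inE ?inordK.
apply: stepup_stable; first by rewrite -Bidx_stepup.
move=> m /andP [le_Bm _]; apply: eq_card => l; rewrite !inE.
by case: eqP => [->|] //=; rewrite pass_i // Bidx_stepup.
Qed.

Definition null_event (i : 'I_b) (j : 'I_(s i)) (k : nat) : set T :=
  [set w | (X i j w <= hyp_level k) && (Bidx_forced i w == k)].

Lemma null_term_ge0 i j (k : nat) w : 0 <= k%:R^-1 * \1_(null_event i j k) w :> R.
Proof. by rewrite mulr_ge0 ?invr_ge0 ?indicE. Qed.

Definition null_terms i j (w : T) : R :=
  \sum_(k < b.+1 | (0 < k)%N) k%:R^-1 * \1_(null_event i j k) w.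

Lemma null_terms_ge0 i j w : 0 <= null_terms i j w.
Proof. by apply: sumr_ge0 => k _; rewrite null_term_ge0. Qed.

Lemma le_null_terms i j w : (0 < B w)%N ->
  (X i j w <= hyp_level (B w))%R%:R / (B w)%:R <= null_terms i j w.
Proof.
move=> B_gt0; have [Xij|_] := boolP (X i j w <= _); last by rewrite mul0r null_terms_ge0.
have B_lt : (B w < b.+1)%N by rewrite ltnS Bidx_le.
rewrite /null_terms (bigD1 (Ordinal B_lt)) //= mul1r indicE mem_set /=; last first.
  by rewrite /null_event /= Xij (Bidx_forced_eq _ _ _ B_gt0 Xij) eqxx.
by rewrite mulr1n mulr1 lerDl sumr_ge0 // => k _; rewrite null_term_ge0.
Qed.

Variable H : forall i : 'I_b, 'I_(s i) -> bool.

Definition fdp_bound (w : T) : R := \sum_(i < b) \sum_(j < s i | ~~ H i j) null_terms i j w.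

Lemma fdp_bound_ge0 w : 0 <= fdp_bound w.
Proof. by do 2!(apply: sumr_ge0 => ? _); rewrite null_terms_ge0. Qed.

Lemma Vnum_le w : (Vnum b s T X H alpha w <=
  \sum_(i < b) \sum_(j < s i | ~~ H i j) (X i j w <= hyp_level (B w))%R)%N.
Proof.
rewrite /Vnum; apply: leq_sum => i _; rewrite [leqRHS]big_mkcond /=; apply: leq_sum => j _.
case: (H i j); rewrite ?andbF //= andbT.
by case/boolP: (rejected _ _ _ _ _ _ _ _) => // /and3P [_ _ ->].
Qed.

Lemma FDP_le_fdp_bound w : FDP b s T X H alpha w <= fdp_bound w.
Proof.
rewrite /FDP; have [B0|B_gt0] := posnP (B w).
  rewrite /Vnum big1 ?mul0r ?fdp_bound_ge0 // => i _.
  by rewrite big1 // => j _; rewrite /rejected B0.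
apply: (@le_trans _ _ ((Vnum b s T X H alpha w)%:R / (B w)%:R)).
  rewrite ler_wpM2l // lef_pV2 ?posrE ?ltr0n ?leq_max ?orbT // ler_nat.
  exact: leq_trans (Bidx_le_Rnum _ B_gt0) (leq_maxl _ _).
apply: (@le_trans _ _ ((\sum_(i < b) \sum_(j < s i | ~~ H i j)
    (X i j w <= hyp_level (B w))%R)%N%:R / (B w)%:R)).
  by rewrite ler_wpM2r ?invr_ge0 // ler_nat Vnum_le.
rewrite natr_sum mulr_suml; apply: ler_sum => i _.
rewrite natr_sum mulr_suml; apply: ler_sum => j _.
exact: le_null_terms.
Qed.

End StepUpPointwise.

Section RowSigma.
Context {d : measure_display} {T : measurableType d} {R : realType}
  {b : nat} {s : 'I_b -> nat} {X : forall i : 'I_b, 'I_(s i) -> T -> R} {i : 'I_b}.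

Let gen : set (set T) :=
  [set E | exists (j : 'I_(s i)) (A : set R), measurable A /\ E = X i j @^-1` A].
Local Notation rowT := (g_sigma_algebraType gen).
Local Notation rs := (row_sigma b s X i).

Lemma row_sigma_measurable A :
  (forall j, measurable_fun setT (X i j)) -> rs A -> measurable A.
Proof.
move=> X_meas; apply: smallest_sub => //; first exact: sigma_algebra_measurable.
by move=> _ [j [B [mB ->]]]; rewrite -[X i j @^-1` B]setTI; exact: X_meas.
Qed.

Lemma row_sigma_preimage j A : measurable A -> rs (X i j @^-1` A).
Proof. by move=> mA; apply: sub_gen_smallest; exists j, A. Qed.

Lemma row_sigma_setT : rs setT.
Proof. exact: (@measurableT _ rowT). Qed.

Lemma row_sigma_setC A : rs A -> rs (~` A).
Proof. exact: (@measurableC _ rowT). Qed.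

Lemma row_sigma_bigcap (I : finType) (E : I -> set T) :
  (forall k, rs (E k)) -> rs (\bigcap_(k in setT) E k).
Proof. by move=> rsE; apply: (@fin_bigcap_measurable _ rowT) => // k _; exact: rsE. Qed.

Lemma row_sigma_bigcup (I : finType) (E : I -> set T) :
  (forall k, rs (E k)) -> rs (\bigcup_(k in setT) E k).
Proof. by move=> rsE; apply: (@fin_bigcup_measurable _ rowT) => // k _; exact: rsE. Qed.

End RowSigma.

Section RowIndependence.
Context {d : measure_display} {T : measurableType d} {R : realType}
  {P : probability T R} {b : nat} {s : 'I_b -> nat}
  {X : forall i : 'I_b, 'I_(s i) -> T -> R}.
Hypothesis X_meas : forall i j, measurable_fun setT (X i j).
Hypothesis rows_indep : rows_independent P b s X.
Context {F : finType} {pat : 'I_b -> T -> F}.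
Hypothesis pat_row : forall l v, row_sigma b s X l [set w | pat l w = v].
Variables (i : 'I_b) (v0 : F).

Local Notation pattern_event Q :=
  [set w | Q [ffun l => if l == i then v0 else pat l w]].

Let cylinder (q : {ffun 'I_b -> F}) : set T := [set w | forall l, l != i -> pat l w = q l].

Let measurable_cylinder q : measurable (cylinder q).
Proof.
rewrite (_ : cylinder q = \bigcap_(l in [set l | l != i]) [set w | pat l w = q l]) //.
apply: fin_bigcap_measurable => [|l _]; first exact: finite_finset.
exact: row_sigma_measurable _ (X_meas l) (pat_row l (q l)).
Qed.

Let prob_setI_cylinder q A : row_sigma b s X i A ->
  P (A `&` cylinder q) = (P A * \prod_(l < b | l != i) P [set w | pat l w = q l])%E.
Proof.
move=> rsA; pose E l := if l == i then A else [set w | pat l w = q l].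
have -> : A `&` cylinder q = \bigcap_(l in [set: 'I_b]) E l.
  apply/seteqP; split => w.
    by move=> [Aw cyl_w] l _; rewrite /E; case: eqP => [//|/eqP]; exact: cyl_w.
  move=> Ew; split; first by have := Ew i I; rewrite /E eqxx.
  by move=> l /negPf l_i; have := Ew l I; rewrite /E l_i.
rewrite rows_indep; last by move=> l; rewrite /E; case: eqP => [->|_].
rewrite (bigD1 i) //= /E eqxx; congr (_ * _)%E.
by apply: eq_bigr => l /negPf ->.
Qed.

Let indep_cylinder q A : row_sigma b s X i A ->
  P (A `&` cylinder q) = (P A * P (cylinder q))%E.
Proof.
move=> rsA; rewrite prob_setI_cylinder // -[cylinder q]setTI.
rewrite prob_setI_cylinder; last exact: row_sigma_setT.
by rewrite probability_setT mul1e.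
Qed.

Let pattern_event_bigcup (Q : pred {ffun 'I_b -> F}) :
  pattern_event Q = \bigcup_(q in [set q | Q q && (q i == v0)]) cylinder q.
Proof.
apply/seteqP; split => w.
  move=> Qw; exists [ffun l => if l == i then v0 else pat l w] => /=.
    by rewrite ffunE eqxx eqxx andbT.
  by move=> l /negPf l_i; rewrite ffunE l_i.
move=> [q /andP [Qq /eqP qi] cyl_w] /=.
suff -> : [ffun l => if l == i then v0 else pat l w] = q by [].
by apply/ffunP => l; rewrite ffunE; case: eqP => [->|/eqP]; [rewrite qi | exact: cyl_w].
Qed.

Lemma measurable_pattern_event (Q : pred {ffun 'I_b -> F}) : measurable (pattern_event Q).
Proof.
by rewrite (pattern_event_bigcup Q); apply: fin_bigcup_measurable => //; exact: finite_finset.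
Qed.

Lemma indep_pattern_event (Q : pred {ffun 'I_b -> F}) A : row_sigma b s X i A ->
  P (A `&` pattern_event Q) = (P A * P (pattern_event Q))%E.
Proof.
move=> rsA; have mA := row_sigma_measurable _ (X_meas i) rsA.
have cylinder_disj : trivIset [set q | Q q && (q i == v0)] cylinder.
  move=> q q' /andP [_ /eqP qi] /andP [_ /eqP q'i] [w [cyl_w cyl'_w]].
  apply/ffunP => l; have [->|l_i] := eqVneq l i; first by rewrite qi q'i.
  by rewrite -cyl_w // -cyl'_w.
rewrite (pattern_event_bigcup Q) setI_bigcupr.
rewrite !measure_fin_bigcup //; try exact: finite_finset.
- by rewrite ge0_mule_fsumr //; apply: eq_fsbigr => q _; exact: indep_cylinder.
- by move=> q q' Qq Qq' [w [[_ cyl_w] [_ cyl'_w]]]; apply: cylinder_disj => //; exists w.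
- by move=> q _; exact: measurableI.
Qed.

End RowIndependence.

Section Integration.
Context {d : measure_display} {T : measurableType d} {R : realType}
  (mu : {measure set T -> \bar R}).
Local Open Scope ereal_scope.

(* No measurability is needed: the integral of a nonnegative function is a
   supremum over the simple functions below it. *)
Lemma le_ge0_integral (f g : T -> \bar R) :
  (forall x, 0 <= f x) -> (forall x, f x <= g x) ->
  \int[mu]_x f x <= \int[mu]_x g x.
Proof.
move=> f_ge0 le_fg; have g_ge0 x : 0 <= g x := le_trans (f_ge0 x) (le_fg x).
rewrite !ge0_integralTE //; apply: ereal_sup_le => _ [h hf <-].
by exists h => // x; exact: le_trans (hf x) (le_fg x).
Qed.

Lemma ge0_integral_sumEFin (I : eqType) (r : seq I) (Q : pred I) (f : I -> T -> R) :
  (forall k x, (0 <= f k x)%R) -> (forall k, measurable_fun setT (f k)) ->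
  \int[mu]_x (\sum_(k <- r | Q k) f k x)%:E = \sum_(k <- r | Q k) \int[mu]_x (f k x)%:E.
Proof.
move=> f_ge0 f_meas; rewrite -big_filter.
under eq_integral do rewrite -big_filter -sumEFin.
by rewrite ge0_integral_sum // => [k|k x _]; [exact/measurable_EFinP | rewrite lee_fin].
Qed.

Lemma measurable_sum_cond (I : eqType) (r : seq I) (Q : pred I) (f : I -> T -> R) :
  (forall k, measurable_fun setT (f k)) ->
  measurable_fun setT (fun x => (\sum_(k <- r | Q k) f k x)%R).
Proof. by move=> f_meas; under eq_fun do rewrite -big_filter; exact: measurable_sum. Qed.

Lemma integral_scaled_indic (c : R) (A : set T) : (0 <= c)%R -> measurable A ->
  \int[mu]_x (c * \1_A x)%:E = c%:E * mu A.
Proof.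
move=> c_ge0 mA; rewrite (@integralZl_indic _ _ _ mu setT measurableT (fun=> A)) //.
  by rewrite integral_indic ?setIT.
by rewrite ltNge c_ge0.
Qed.

End Integration.

Lemma uniform01_cdf {R : realType} (t : R) : 0 <= t <= 1 ->
  uniform_prob (@ltr01 R) `]-oo, t] = t%:E.
Proof.
case/andP => t_ge0 t_le1; rewrite /uniform_prob integral_uniform_pdf.
have -> : `]-oo, t]%classic `&` `[0, 1]%classic = `[0, t]%classic :> set R.
  apply/seteqP; split => x /=; rewrite !in_itv /=.
    by move=> [x_le /andP [x_ge0 _]]; rewrite x_ge0 x_le.
  by move=> /andP [x_ge0 x_le]; rewrite x_ge0 (le_trans x_le t_le1).
rewrite (eq_integral (fun=> 1%:E)); last first.
  move=> x; rewrite inE /= in_itv /= => /andP [x_ge0 x_le].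
  by rewrite /uniform_pdf x_ge0 (le_trans x_le t_le1) subr0 invr1.
rewrite integral_cst //= lebesgue_measure_itv /= lte_fin.
case: ltP => [t_gt0|t_le0]; first by rewrite mul1e -EFinD subr0.
by rewrite mule0; congr (_%:E); apply/le_anti; rewrite t_ge0 t_le0.
Qed.

Section FDRBound.
Context {d : measure_display} {T : measurableType d} {R : realType}
  (P : probability T R) (b : nat) (s : 'I_b -> nat)
  (X : forall i : 'I_b, 'I_(s i) -> T -> R) (H : forall i : 'I_b, 'I_(s i) -> bool)
  (alpha : R).
Hypothesis X_meas : forall i j, measurable_fun setT (X i j).
Hypothesis b_gt0 : (0 < b)%N.
Hypothesis s_gt0 : forall i, (0 < s i)%N.
Hypothesis alpha_ge0 : 0 <= alpha.
Hypothesis alpha_le1 : alpha <= 1.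
Hypothesis rows_indep : rows_independent P b s X.
Hypothesis null_uniform : forall i j, ~~ H i j -> forall t : R, 0 <= t <= 1 ->
  P (X i j @^-1` `]-oo, t]) = t%:E.

Local Notation n := (ntot b s).
Local Notation passes := (passes b s T X alpha).
Local Notation Bidx_forced := (Bidx_forced b s T X alpha).
Local Notation hyp_level := (hyp_level b s alpha).
Local Notation null_event := (null_event b s T X alpha).

Lemma passes_row_sigma l v : row_sigma b s X l [set w | passes l w = v].
Proof.
pose Y (m : 'I_b.+1) := \bigcup_(j in [set: 'I_(s l)]) (X l j @^-1` `]-oo, hyp_level m]).
have YE (m : 'I_b.+1) w : Y m w <-> m \in passes l w.
  rewrite inE Ptilde_le_block_level //; split => [[j _ /= Xlj]|/existsP [j Xlj]].
    by apply/existsP; exists j; rewrite in_itv in Xlj.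
  by exists j => //=; rewrite in_itv.
rewrite (_ : [set w | _] = \bigcap_(m in [set: 'I_b.+1]) if m \in v then Y m else ~` Y m).
  apply: row_sigma_bigcap => m; case: ifP => _; last apply: row_sigma_setC;
    by apply: row_sigma_bigcup => j; apply: row_sigma_preimage; exact: measurable_itv.
apply/seteqP; split => w /=.
  by move=> <- m _; case: ifP => pass_m; [apply/YE | move/YE; rewrite pass_m].
move=> Yw; apply/setP => m; have := Yw m I.
by case: ifP => [_ /YE //|/negbT v_m /= not_Y]; apply/idP => /YE.
Qed.

Lemma measurable_Bidx_forced_eq i (k : nat) : measurable [set w | Bidx_forced i w == k].
Proof.
exact: (measurable_pattern_event X_meas passes_row_sigma i [set: 'I_b.+1]%SET
  (fun q => stepup_pattern b q == k)).
Qed.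

Lemma prob_setI_Bidx_forced_eq i (k : nat) A : row_sigma b s X i A ->
  P (A `&` [set w | Bidx_forced i w == k]) = (P A * P [set w | Bidx_forced i w == k])%E.
Proof.
exact: (indep_pattern_event X_meas rows_indep passes_row_sigma i [set: 'I_b.+1]%SET
  (fun q => stepup_pattern b q == k)).
Qed.

Lemma hyp_level_itv (k : nat) : (k <= b)%N -> 0 <= hyp_level k <= 1.
Proof.
move=> k_le_b; have n_gt0 : 0 < n%:R :> R by rewrite ltr0n ntot_gt0.
rewrite /hyp_level; apply/andP; split; first by rewrite divr_ge0 ?mulr_ge0.
rewrite ler_pdivrMr // mul1r (le_trans (ler_wpM2l (ler0n _ k) alpha_le1)) // mulr1.
by rewrite ler_nat (leq_trans k_le_b (b_le_ntot _ _ s_gt0)).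
Qed.

Lemma null_eventE i j (k : nat) :
  null_event i j k = X i j @^-1` `]-oo, hyp_level k] `&` [set w | Bidx_forced i w == k].
Proof.
apply/seteqP; split => w /=; rewrite in_itv /=; first by case/andP => -> ->.
by move=> [Xw Bw]; apply/andP.
Qed.

Lemma prob_null_event i j (k : nat) : ~~ H i j -> (k <= b)%N ->
  P (null_event i j k) = ((hyp_level k)%:E * P [set w | Bidx_forced i w == k])%E.
Proof.
move=> null_ij k_le_b; rewrite null_eventE prob_setI_Bidx_forced_eq.
  by rewrite null_uniform ?hyp_level_itv.
by apply: row_sigma_preimage; exact: measurable_itv.
Qed.

Lemma measurable_null_event i j k : measurable (null_event i j k).
Proof.
rewrite null_eventE; apply: measurableI (measurable_Bidx_forced_eq i k).
by rewrite -[_ @^-1` _]setTI; exact: X_meas.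
Qed.

Lemma sum_prob_Bidx_forced_eq i : (\sum_(k < b.+1) P [set w | Bidx_forced i w == k] <= 1)%E.
Proof.
rewrite -(@measure_bigsetU_ord _ _ _ P b.+1 xpredT (fun k => [set w | Bidx_forced i w == k])).
- by apply/probability_le1/bigsetU_measurable => k _; exact: measurable_Bidx_forced_eq.
- by move=> k; exact: measurable_Bidx_forced_eq.
- by move=> k k' _ _ [w [/eqP Bk /eqP Bk']]; apply: val_inj; rewrite /= -Bk -Bk'.
Qed.

Lemma measurable_null_terms i j : measurable_fun setT (null_terms b s T X alpha i j).
Proof.
apply: measurable_sum_cond => k.
exact/measurable_funM/measurable_indic/measurable_null_event.
Qed.

Lemma expectation_null_terms i j : ~~ H i j ->
  (\int[P]_w (null_terms b s T X alpha i j w)%:E <= (alpha / n%:R)%:E)%E.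
Proof.
move=> null_ij.
have -> : (\int[P]_w (null_terms b s T X alpha i j w)%:E
    = \sum_(k < b.+1 | (0 < k)%N) (k%:R^-1)%:E * P (null_event i j k))%E.
  rewrite ge0_integral_sumEFin => [|k w|k]; last 2 first.
  - by rewrite (null_term_ge0 b s T X alpha).
  - by apply/measurable_funM/measurable_indic/measurable_null_event.
  apply: eq_bigr => k _; apply: integral_scaled_indic.
    by rewrite invr_ge0.
  exact: measurable_null_event.
rewrite (eq_bigr (fun k : 'I_b.+1 => (alpha / n%:R)%:E * P [set w | Bidx_forced i w == k]))%E;
  last first.
  move=> k k_gt0; have k_le_b : (k <= b)%N by rewrite -ltnS.
  rewrite prob_null_event // muleA -EFinM; congr (_%:E * _)%E.
  by rewrite /hyp_level; field; rewrite !pnatr_eq0 -!lt0n k_gt0 ntot_gt0.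
rewrite -ge0_sume_distrr => [|k _]; last exact: measure_ge0.
rewrite -[leRHS]mule1 lee_wpmul2l ?lee_fin ?divr_ge0 //.
by apply: le_trans (sum_prob_Bidx_forced_eq i); apply: lee_sum_nneg_subset.
Qed.

Lemma expectation_fdp_bound : (\int[P]_w (fdp_bound b s T X alpha H w)%:E <= alpha%:E)%E.
Proof.
have terms_ge0 i j w := null_terms_ge0 b s T X alpha i j w.
rewrite ge0_integral_sumEFin => [|i w|i]; last 2 first.
- by apply: sumr_ge0 => j _; exact: terms_ge0.
- by apply: measurable_sum_cond => j; exact: measurable_null_terms.
apply: (@le_trans _ _ (\sum_(i < b) \sum_(j < s i) (alpha / n%:R)%:E)%E).
  apply: lee_sum => i _; rewrite ge0_integral_sumEFin => [|j w|j]; last 2 first.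
  - exact: terms_ge0.
  - exact: measurable_null_terms.
  apply: (@le_trans _ _ (\sum_(j < s i | ~~ H i j) (alpha / n%:R)%:E)%E).
    by apply: lee_sum => j; exact: expectation_null_terms.
  by apply: lee_sum_nneg_subset => // j _; rewrite lee_fin divr_ge0.
under eq_bigr do rewrite sumEFin.
rewrite sumEFin lee_fin; under eq_bigr do rewrite sumr_const card_ord.
by rewrite sumrMnr -[_ *+ _]mulr_natr -/(ntot b s) divfK // pnatr_eq0 -lt0n ntot_gt0.
Qed.

Lemma FDR_le : (FDR P b s X H alpha <= alpha%:E)%E.
Proof.
apply: le_trans expectation_fdp_bound; apply: le_ge0_integral => w; rewrite lee_fin.
  by rewrite /FDP divr_ge0.
exact: FDP_le_fdp_bound.
Qed.

End FDRBound.

Theorem mainTheorem1 (d : measure_display) (T : measurableType d) (R : realType)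
  (P : probability T R) (b : nat) (s : 'I_b -> nat)
  (X : forall i : 'I_b, 'I_(s i) -> {RV P >-> R})
  (H : forall i : 'I_b, 'I_(s i) -> bool)
  (alpha : R) :
  (0 < b)%N -> (forall i, 0 < s i)%N ->
  (forall i (j : 'I_(s i)), ~~ H i j ->
     forall A : set R, measurable A ->
       distribution P (X i j) A = uniform_prob (@ltr01 R) A) ->
  rows_independent P b s (fun i j => (X i j : T -> R)) ->
  0 < alpha < 1 ->
  (FDR P b s (fun i j => (X i j : T -> R)) H alpha <= alpha%:E)%E.
Proof.
move=> b_gt0 s_gt0 null_uniform rows_indep /andP [alpha_gt0 alpha_lt1].
apply: FDR_le => //; try exact: ltW.
move=> i j null_ij t t01.
by rewrite -(uniform01_cdf _ t01) -(null_uniform i j) //; exact: measurable_itv.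
Qed.
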